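(* Let $M$ be a commutative monoid and $\mathcal{A}$ an $\mathbb{H}M$-module, regarded as a (symmetric) $\mathbb{D}M$-module. Then there are natural isomorphisms $H^n(M,1;\mathcal{A})\cong H^n_{\mathrm{L}}(M,\mathcal{A})$ for all $n\ge0$.
   Context: Let $M$ be a commutative monoid with identity $e$. $\mathbb{H}M$ is the category with objects the elements of $M$ and morphisms $(x,y):x\to xy$, composition $(xy,z)(x,y)=(x,yz)$. An $\mathbb{H}M$-module $\mathcal{A}$ is a functor $\mathbb{H}M\to\mathbf{Ab}$: abelian groups $\mathcal{A}(x)$ with homomorphisms $y_*:\mathcal{A}(x)\to\mathcal{A}(xy)$, $y_*z_*=(yz)_*$, $e_*=\mathrm{id}$. Tensor product: $(\mathcal{A}\otimes_{\mathbb{H}M}\mathcal{B})(x)$ is the quotient of $\bigoplus_{zt=x}\mathcal{A}(z)\otimes\mathcal{B}(t)$ by $u_*a\otimes b=a\otimes u_*b$, with $y_*(a\otimes b)=y_*a\otimes b$; unit the constant module $\mathbb{Z}$. Chain complexes of $\mathbb{H}M$-modules form a symmetric monoidal category (Leibniz differential, Koszul signs). A commutative DGA-algebra over $\mathbb{H}M$ is a commutative monoid $(\mathcal{A},\circ,\iota)$ in it with monoid morphism $\epsilon:\mathcal{A}\to\mathbb{Z}$; write $\epsilon_x(a)=\tilde\epsilon(a)\cdot x$. Bar construction $\mathbf{B}(\mathcal{A})$: with $\bar{\mathcal{A}}=\mathrm{coker}\,\iota$, $\mathbf{B}(\mathcal{A})_n(x)$ is generated by $[\,]$ (degree 0) and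 $[a_1|\cdots|a_p]$, $a_i\in\bar{\mathcal{A}}_{r_i}(x_i)$, $x_1\cdots x_p=x$, $p+\sum r_i=n$, with differential $\partial[a_1|\cdots|a_p]=-\sum_i(-1)^{e_{i-1}}[\cdots|\partial a_i|\cdots]+\tilde\epsilon(a_1)x_{1*}[a_2|\cdots|a_p]+\sum_{i=1}^{p-1}(-1)^{e_i}[\cdots|a_i\circ a_{i+1}|\cdots]+(-1)^{e_p}\tilde\epsilon(a_p)x_{p*}[a_1|\cdots|a_{p-1}]$, $e_i=i+r_1+\dots+r_i$. $\mathcal{Z}M$: $\mathcal{Z}M(x)$ free abelian on $\{(u,v):uv=x\}$, $y_*(u,v)=(yu,v)$, $(u,v)\circ(w,t)=(uw,vt)$, unit $(e,e)$, degree $0$, augmentation $(u,v)\mapsto$ generator of $\mathbb{Z}(x)$. $H^n(M,1;\mathcal{A})=H^n(\mathrm{Hom}_{\mathbb{H}M}(\mathbf{B}(\mathcal{Z}M),\mathcal{A}))$. $\mathbb{D}M$ is the category with objects the elements of $M$ and morphisms $(x,y,z):y\to xyz$, composition $(u,xyz,v)(x,y,z)=(ux,y,zv)$. A $\mathbb{D}M$-module is a functor $\mathbb{D}M\to\mathbf{Ab}$, i.e. groups $\mathcal{A}(x)$ with commuting left and right actions $x_*:\mathcal{A}(y)\to\mathcal{A}(xy)$, $x^*:\mathcal{A}(y)\to\mathcal{A}(yx)$. An $\mathbb{H}M$-module is regarded as a $\mathbb{D}M$-module by $x^*=x_*$. Leech cohomology $H^n_{\mathrm{L}}(M,\mathcal{A})$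 is the cohomology of Leech's standard normalized cochain complex: $C^0=\mathcal{A}(e)$, $C^n$ the functions $f:M^n\to\bigcup\mathcal{A}(x)$ with $f(x_1,\dots,x_n)\in\mathcal{A}(x_1\cdots x_n)$ vanishing when some $x_i=e$; $(\partial^0a)(x)=x_*a-x^*a$; $(\partial^nf)(x_1,\dots,x_{n+1})=x_{1*}f(x_2,\dots,x_{n+1})+\sum_{i=1}^n(-1)^if(\dots,x_ix_{i+1},\dots)+(-1)^{n+1}x_{n+1}^*f(x_1,\dots,x_n)$. *)

From mathcomp Require Import all_boot all_algebra.
From mathcomp Require Import zify.
Set Implicit Arguments. Unset Strict Implicit. Unset Printing Implicit Defensive.
Import GRing.Theory.
Local Open Scope ring_scope.

Record comMonoid := ComMonoid {
  mcar :> Type;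
  mmul : mcar -> mcar -> mcar;
  munit : mcar;
  mmulA : forall x y z, mmul x (mmul y z) = mmul (mmul x y) z;
  mmulC : forall x y, mmul x y = mmul y x;
  mmul1 : forall x, mmul munit x = x }.
Arguments mmul {c}. Arguments munit {c}.

Lemma mmulr1 (M : comMonoid) (x : M) : mmul x munit = x.
Proof. by rewrite mmulC mmul1. Qed.

Definition castA (M : Type) (A : M -> Type) (x y : M) (p : x = y) (a : A x) : A y :=
  eq_rect x A a y p.
Arguments castA {M} A {x y} p a.

(* HM-modules: functors HM -> Ab.  The morphism (x,y) : x -> xy acts   *)
(* by  hmact x y = y_* : A x -> A (x y).                               *)
Unset Implicit Arguments.
Record HMmodule (M : comMonoid) := HMModule {
  hmA :> M -> zmodType;
  hmact : forall x y : M, hmA x -> hmA (mmul x y);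
  hmact_add : forall x y (a b : hmA x), hmact x y (a + b) = hmact x y a + hmact x y b;
  hmact_unit : forall x (a : hmA x), castA hmA (mmulr1 x) (hmact x munit a) = a;
  hmact_comp : forall x y z (a : hmA x),
    hmact (mmul x y) z (hmact x y a) = castA hmA (mmulA x y z) (hmact x (mmul y z) a) }.
Set Implicit Arguments.
Arguments hmact {M} _ x y _.
Arguments hmA {M} _ _.

Unset Implicit Arguments.
Record HMmor (M : comMonoid) (A B : HMmodule M) := HMMor {
  hmf :> forall x : M, A x -> B x;
  hmf_add : forall x (a b : A x), hmf x (a + b) = hmf x a + hmf x b;
  hmf_nat : forall x y (a : A x), hmf (mmul x y) (hmact A x y a) = hmact B x y (hmf x a) }.

Set Implicit Arguments.

Arguments HMmor {M} A B.
Arguments hmf {M A B} _ _ _.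
Definition sgn (V : zmodType) (k : nat) (a : V) : V := if odd k then - a else a.

Definition mprod (M : comMonoid) (s : seq M) : M := foldr mmul munit s.

Lemma mprod_cat (M : comMonoid) (s1 s2 : seq M) :
  mprod (s1 ++ s2) = mmul (mprod s1) (mprod s2).
Proof.
elim: s1 => [|x s1 IH] /=; first by rewrite mmul1.
by rewrite IH mmulA.
Qed.

Definition cochain (M : comMonoid) (I : Type) (dg : I -> M) (A : HMmodule M) :=
  forall i : I, A (dg i).

Definition czero (M : comMonoid) I (dg : I -> M) (A : HMmodule M) : cochain dg A := fun i => 0.
Definition cadd (M : comMonoid) I (dg : I -> M) (A : HMmodule M) (f g : cochain dg A) : cochain dg A :=
  fun i => f i + g i.
Definition csub (M : comMonoid) I (dg : I -> M) (A : HMmodule M) (f g : cochain dg A) : cochain dg A :=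
  fun i => f i - g i.
Definition cpost (M : comMonoid) I (dg : I -> M) (A B : HMmodule M) (g : HMmor A B) (f : cochain dg A)
  : cochain dg B := fun i => g _ (f i).

Unset Implicit Arguments.
Record complex (M : comMonoid) (A : HMmodule M) := Complex {
  cx_I : nat -> Type;
  cx_dg : forall n, cx_I n -> M;
  cx_valid : forall n, cochain (cx_dg n) A -> Prop;   (* membership in C^n *)
  cx_d : forall n, cochain (cx_dg n) A -> cochain (cx_dg n.+1) A }.

Set Implicit Arguments.
Arguments complex {M} A.
Arguments Complex {M A}.
Arguments cx_I {M A} _ _.
Arguments cx_dg {M A} _ _ _.
Arguments cx_valid {M A} _ {n} _.
Arguments cx_d {M A} _ {n} _ _.
Definition cocycle (M : comMonoid) (A : HMmodule M) (K : complex A) (n : nat)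
    (z : cochain (cx_dg K n) A) : Prop :=
  cx_valid K z /\ cx_d K z = czero _ _.
Arguments cocycle {M A} K {n} z.

Definition coboundary (M : comMonoid) (A : HMmodule M) (K : complex A) (n : nat)
    : cochain (cx_dg K n) A -> Prop :=
  match n return cochain (cx_dg K n) A -> Prop with
  | 0 => fun z => z = czero _ _
  | m.+1 => fun z => exists c : cochain (cx_dg K m) A, cx_valid K c /\ cx_d K c = z
  end.
Arguments coboundary {M A} K {n} _.

(* phi induces an isomorphism of abelian groups H^n(K) = Z^n/B^n -> H^n(L):
   phi maps cocycles to cocycles, is additive modulo coboundaries,
   detects coboundaries exactly (hence is well defined and injective on
   classes), and is onto modulo coboundaries. *)
Definition cohom_iso (M : comMonoid) (A : HMmodule M) (K L : complex A) (n : nat)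
    (phi : cochain (cx_dg K n) A -> cochain (cx_dg L n) A) : Prop :=
  [/\ forall z, cocycle K z -> cocycle L (phi z),
      forall z1 z2, cocycle K z1 -> cocycle K z2 ->
        coboundary L (csub (phi (cadd z1 z2)) (cadd (phi z1) (phi z2))),
      forall z, cocycle K z -> (coboundary L (phi z) <-> coboundary K z)
    & forall w, cocycle L w -> exists2 z, cocycle K z & coboundary L (csub w (phi z))].
Arguments cohom_iso {M A} K L n phi.

Definition mergeWith (T : Type) (op : T -> T -> T) (x0 : T) (i : nat) (s : seq T) : seq T :=
  take i s ++ op (nth x0 s i) (nth x0 s i.+1) :: drop i.+2 s.

Lemma mergeWith_size (T : Type) op (x0 : T) n (i : 'I_n) (t : n.+1.-tuple T) :
  size (mergeWith op x0 i t) == n.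
Proof.
have ltin : (i < n)%N by [].
rewrite /mergeWith size_cat /= size_take size_drop size_tuple ltnS (ltnW ltin).
apply/eqP; lia.
Qed.

Lemma init_size (T : Type) n (t : n.+1.-tuple T) : size (take n t) == n.
Proof. by rewrite size_take size_tuple ltnSn. Qed.

Definition init_tuple (T : Type) n (t : n.+1.-tuple T) : n.-tuple T := Tuple (init_size t).

(* Leech's normalized standard complex (A regarded as a symmetric      *)
(* DM-module whose left and right actions coincide).                  *)
Section Leech.
Context (M : comMonoid).

Definition leechDeg (n : nat) (t : n.-tuple M) : M := mprod t.

Definition mergeL (i : nat) (s : seq M) : seq M := mergeWith mmul munit i s.

Definition merge_tuple n (i : 'I_n) (t : n.+1.-tuple M) : n.-tuple M :=
  Tuple (mergeWith_size mmul munit i t).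

Lemma mprod_mergeL (i : nat) (s : seq M) : (i.+1 < size s)%N -> mprod (mergeL i s) = mprod s.
Proof.
move=> lt; rewrite -{2}(cat_take_drop i s) (drop_nth munit (ltnW lt)).
rewrite (drop_nth munit lt) /mergeL /mergeWith !mprod_cat /=.
by congr mmul; rewrite mmulA.
Qed.

Lemma mprod_merge n (i : 'I_n) (t : n.+1.-tuple M) :
  mprod (merge_tuple i t) = mprod t.
Proof. by apply: mprod_mergeL; rewrite size_tuple ltnS. Qed.

Lemma mprod_left n (t : n.+1.-tuple M) :
  mmul (mprod (behead_tuple t)) (thead t) = mprod t.
Proof. case: t => [[|x s] //] Ht; by rewrite /= mmulC. Qed.

Lemma mprod_right n (t : n.+1.-tuple M) :
  mmul (mprod (init_tuple t)) (tnth t ord_max) = mprod t.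
Proof.
rewrite -[in RHS](cat_take_drop n t) mprod_cat /=.
rewrite (drop_nth munit); last by rewrite size_tuple.
rewrite drop_oversize ?size_tuple // /= mmulr1 (tnth_nth munit) //.
Qed.

Definition leech_d (A : HMmodule M) (n : nat) (f : cochain (@leechDeg n) A)
  : cochain (@leechDeg n.+1) A :=
  fun t =>
    castA (hmA A) (mprod_left t) (hmact A _ (thead t) (f (behead_tuple t)))
    + \sum_(i < n) sgn i.+1 (castA (hmA A) (mprod_merge i t) (f (merge_tuple i t)))
    + sgn n.+1 (castA (hmA A) (mprod_right t) (hmact A _ (tnth t ord_max) (f (init_tuple t)))).

Definition leech_valid (A : HMmodule M) (n : nat) (f : cochain (@leechDeg n) A) : Prop :=
  forall (t : n.-tuple M) (i : 'I_n), tnth t i = munit -> f t = 0.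

Definition leechCx (A : HMmodule M) : complex A :=
  @Complex M A (fun n => n.-tuple M) leechDeg (@leech_valid A) (@leech_d A).

End Leech.

(* The cochain complex Hom_HM(B(ZM), A).                               *)
(* ZM(x) is free on the pairs (u,v) with uv = x; Abar = coker iota     *)
(* kills the pairs (x,e).  B(ZM)_0 = Z (generator [ ] in every degree  *)
(* x) and, for n >= 1, B(ZM)_n(x) is the n-fold HM-tensor power of    *)
(* Abar, generated by the [(u1,v1)|...|(un,vn)] with prod u_i v_i = x, *)
(* subject to: multilinearity (automatic, Abar free), [..|(u,e)|..]=0, *)
(* and the HM-balancing  u_* a (x) b = a (x) u_* b.  An HM-linear map  *)
(* B(ZM)_n -> A is therefore given by its values on generators:        *)
(*  n = 0 : a family phi x in A(x), natural in x;                      *)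
(*  n > 0 : a value phi t in A(prod t) for each generator t, natural,  *)
(*          balanced and vanishing on generators with some v_i = e.    *)
(* The coboundary is  phi |-> phi o d  (d the bar differential).       *)
Lemma mmulACA (M : comMonoid) (a b c d : M) :
  mmul (mmul a b) (mmul c d) = mmul (mmul a c) (mmul b d).
Proof.
rewrite -!mmulA; congr mmul; rewrite !mmulA; congr mmul; exact: mmulC.
Qed.

Section Bar.
Context (M : comMonoid).

Definition pmul (p : M * M) : M := mmul p.1 p.2.
Definition pprod (s : seq (M * M)) : M := mprod (map pmul s).
Definition p0 : M * M := (munit, munit).

Lemma pprod_cat (s1 s2 : seq (M * M)) : pprod (s1 ++ s2) = mmul (pprod s1) (pprod s2).
Proof. by rewrite /pprod map_cat mprod_cat. Qed.

(* the HM-action y_* on a generator: y_*[(u1,v1)|r] = [(y u1,v1)|r] *)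
Definition yact (y : M) (s : seq (M * M)) : seq (M * M) :=
  if s is p :: r then (mmul y p.1, p.2) :: r else [::].

Lemma yact_size n y (t : n.-tuple (M * M)) : size (yact y t) == n.
Proof. by case: t => [[|p r] Ht]. Qed.

Definition yact_tuple n (y : M) (t : n.-tuple (M * M)) : n.-tuple (M * M) :=
  Tuple (yact_size y t).

Lemma pprod_yact n y (t : n.+1.-tuple (M * M)) :
  mmul (pprod t) y = pprod (yact_tuple y t).
Proof.
case: t => [[|p r] //] Ht.
by rewrite /pprod /= /pmul /= mmulC !mmulA.
Qed.

(* u_* acting on the j-th factor: (u_j,v_j) |-> (w u_j, v_j) *)
Definition umul (j : nat) (w : M) (s : seq (M * M)) : seq (M * M) :=
  take j s ++ (mmul w (nth p0 s j).1, (nth p0 s j).2) :: drop j.+1 s.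

Lemma umul_size n (j : 'I_n) w (t : n.-tuple (M * M)) : size (umul j w t) == n.
Proof.
have ltjn : (j < n)%N by [].
rewrite /umul size_cat /= size_take size_drop size_tuple ltjn.
apply/eqP; lia.
Qed.

Definition umul_tuple n (j : 'I_n) (w : M) (t : n.-tuple (M * M)) : n.-tuple (M * M) :=
  Tuple (umul_size j w t).

Lemma pprod_umul n (j : 'I_n) w (t : n.-tuple (M * M)) :
  pprod (umul_tuple j w t) = mmul w (pprod t).
Proof.
have ltjn : (j < size t)%N by rewrite size_tuple.
rewrite /= /umul -[in RHS](cat_take_drop j t) (drop_nth p0 ltjn) !pprod_cat.
rewrite /pprod /= /pmul /= -!mmulA.
by rewrite [in RHS]mmulA [in RHS](mmulC w) -mmulA.
Qed.

Lemma pprod_umul_bal m (i : 'I_m) w (t : m.+1.-tuple (M * M)) :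
  pprod (umul_tuple (lift ord0 i) w t) = pprod (umul_tuple (widen_ord (leqnSn m) i) w t).
Proof. by rewrite !pprod_umul. Qed.

(* merging two adjacent factors by the product of ZM:
   (u,v) o (u',v') = (u u', v v') *)
Definition pcomp (p q : M * M) : M * M := (mmul p.1 q.1, mmul p.2 q.2).

Definition pmerge_tuple n (i : 'I_n) (t : n.+1.-tuple (M * M)) : n.-tuple (M * M) :=
  Tuple (mergeWith_size pcomp p0 i t).

Lemma pprod_pmerge n (i : 'I_n) (t : n.+1.-tuple (M * M)) :
  pprod (pmerge_tuple i t) = pprod t.
Proof.
have lt : (i.+1 < size t)%N by rewrite size_tuple ltnS.
rewrite /= /mergeWith -[in RHS](cat_take_drop i t) (drop_nth p0 (ltnW lt)).
rewrite (drop_nth p0 lt) !pprod_cat; congr mmul.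
by rewrite /pprod /= /pmul /= [in RHS]mmulA [in RHS]mmulACA.
Qed.

Lemma bar_left m (t : m.+2.-tuple (M * M)) :
  pprod (yact_tuple (pmul (thead t)) (behead_tuple t)) = pprod t.
Proof.
case: t => [[|p [|q r]] //] Ht.
by rewrite /pprod /= /pmul /= !mmulA.
Qed.

Lemma bar_right m (t : m.+2.-tuple (M * M)) :
  pprod (yact_tuple (pmul (tnth t ord_max)) (init_tuple t)) = pprod t.
Proof.
rewrite -pprod_yact.
rewrite -[in RHS](cat_take_drop m.+1 t) pprod_cat.
rewrite (drop_nth p0); last by rewrite size_tuple.
rewrite drop_oversize ?size_tuple // (tnth_nth p0).
by rewrite /pprod /= mmulr1.
Qed.

Definition barI (n : nat) : Type :=
  match n with 0 => M | m.+1 => m.+1.-tuple (M * M) end.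

Definition barDeg (n : nat) : barI n -> M :=
  match n return barI n -> M with 0 => fun x => x | m.+1 => fun t => pprod t end.

Variable A : HMmodule M.

(* d[a] = eps(a) x_*[ ] - eps(a) x_*[ ]  (eps = 1 on generators) *)
Definition bar_d0 (phi : cochain (@barDeg 0) A) : cochain (@barDeg 1) A :=
  fun t => phi (pprod t) + sgn 1 (phi (pprod t)).

Definition bar_dS (m : nat) (phi : cochain (@barDeg m.+1) A) : cochain (@barDeg m.+2) A :=
  fun t =>
    castA (hmA A) (bar_left t) (phi (yact_tuple (pmul (thead t)) (behead_tuple t)))
    + \sum_(i < m.+1) sgn i.+1 (castA (hmA A) (pprod_pmerge i t) (phi (pmerge_tuple i t)))
    + sgn m.+2 (castA (hmA A) (bar_right t)
                  (phi (yact_tuple (pmul (tnth t ord_max)) (init_tuple t)))).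

Definition bar_d (n : nat) : cochain (@barDeg n) A -> cochain (@barDeg n.+1) A :=
  match n return cochain (@barDeg n) A -> cochain (@barDeg n.+1) A with
  | 0 => bar_d0
  | m.+1 => @bar_dS m
  end.

Definition bar_valid (n : nat) : cochain (@barDeg n) A -> Prop :=
  match n return cochain (@barDeg n) A -> Prop with
  | 0 => fun phi => forall x y : M, phi (mmul x y) = hmact A x y (phi x)
  | m.+1 => fun phi =>
     [/\
         forall (y : M) (t : m.+1.-tuple (M * M)),
           phi (yact_tuple y t) = castA (hmA A) (pprod_yact y t) (hmact A (pprod t) y (phi t)),
         forall (i : 'I_m) (w : M) (t : m.+1.-tuple (M * M)),
           phi (umul_tuple (widen_ord (leqnSn m) i) w t)
           = castA (hmA A) (pprod_umul_bal i w t) (phi (umul_tuple (lift ord0 i) w t))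
       &
         forall (t : m.+1.-tuple (M * M)) (i : 'I_m.+1), (tnth t i).2 = munit -> phi t = 0]
  end.

End Bar.

Definition barCx (M : comMonoid) (A : HMmodule M) : complex A :=
  Complex (fun n => barI M n) (@barDeg M) (@bar_valid M A) (@bar_d M A).

From Pilot Require Import Defs.
From mathcomp Require Import all_boot all_algebra zify.
From Stdlib Require Import ProofIrrelevance FunctionalExtensionality.
Set Implicit Arguments. Unset Strict Implicit. Unset Printing Implicit Defensive.
Import GRing.Theory.
Local Open Scope ring_scope.

(* Naturality under y_* and the balancing relation u_* a (x) b = a (x) u_* b
   let one push every left component of a bar generator to the front:
     phi [(u1,v1)|...|(un,vn)] = (u1...un)_* phi [(e,v1)|...|(e,vn)].
   So a cochain on B(ZM) is determined by its values on the generators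
   [(e,x1)|...|(e,xn)], and these values form an arbitrary normalized Leech
   cochain.  On such generators the bar differential is Leech's differential
   (a generator (e,x) has augmentation 1 and multiplies to x), so restriction
   is an isomorphism of cochain complexes, compatible with maps of modules. *)

Section HeterogeneousEquality.
Variables (T : Type) (B : T -> Type).

Definition heq (x y : T) (a : B x) (b : B y) := exists p : x = y, castA B p a = b.

Lemma castA_id x (p : x = x) (a : B x) : castA B p a = a.
Proof. by rewrite (proof_irrelevance _ p erefl). Qed.

Lemma heq_eq x (a b : B x) : heq a b -> a = b.
Proof. by case=> p <-; rewrite castA_id. Qed.

Lemma heq_refl x (a : B x) : heq a a.
Proof. by exists erefl. Qed.

Lemma heq_sym x y (a : B x) (b : B y) : heq a b -> heq b a.
Proof. by case=> p <-; exists (esym p); case: _ / p. Qed.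

Lemma heq_trans x y w (a : B x) (b : B y) (c : B w) : heq a b -> heq b c -> heq a c.
Proof. by case=> p <- [q <-]; exists (etrans p q); case: _ / q; case: _ / p. Qed.

Lemma heq_castL x y w (p : x = y) (a : B x) (c : B w) : heq a c -> heq (castA B p a) c.
Proof. by move=> h; apply: heq_trans h; apply: heq_sym; exists p. Qed.

Lemma heq_castR x y w (p : x = y) (a : B x) (c : B w) : heq c a -> heq c (castA B p a).
Proof. by move=> h; apply: heq_trans h _; exists p. Qed.

Lemma heq_app (I : Type) (dg : I -> T) (F : forall i, B (dg i)) i j :
  i = j -> heq (F i) (F j).
Proof. by move=> ->; apply: heq_refl. Qed.

End HeterogeneousEquality.
Arguments heq {T} B {x y} a b.

Section CastAdditive.
Variables (T : Type) (A : T -> zmodType) (x y : T) (p : x = y).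

Lemma castA_add (a b : A x) : castA A p (a + b) = castA A p a + castA A p b.
Proof. by case: _ / p. Qed.

Lemma castA_0 : castA A p 0 = 0.
Proof. by case: _ / p. Qed.

Lemma castA_sgn k (a : A x) : castA A p (sgn k a) = sgn k (castA A p a).
Proof. by case: _ / p. Qed.

Lemma castA_sum n (F : 'I_n -> A x) :
  castA A p (\sum_(i < n) F i) = \sum_(i < n) castA A p (F i).
Proof. by case: _ / p. Qed.

End CastAdditive.

Lemma sgn0 (V : zmodType) k : sgn k (0 : V) = 0.
Proof. by rewrite /sgn; case: odd; rewrite ?oppr0. Qed.

Section CochainIsomorphism.
Variables (M : comMonoid) (A : HMmodule M).

Lemma csubxx I (dg : I -> M) (f : cochain dg A) : csub f f = czero _ _.
Proof. by apply: functional_extensionality_dep => i; apply: subrr. Qed.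

Lemma additive_czero I J (dgI : I -> M) (dgJ : J -> M)
    (h : cochain dgI A -> cochain dgJ A) :
  (forall a b, h (cadd a b) = cadd (h a) (h b)) -> h (czero _ _) = czero _ _.
Proof.
move=> hD; have e00 : cadd (czero dgI A) (czero dgI A) = czero _ _.
  by apply: functional_extensionality_dep => i; apply: addr0.
apply: functional_extensionality_dep => j.
have := congr1 (fun f => f j) (hD (czero _ _) (czero _ _)).
by rewrite e00 /cadd -{1}[h _ j]addr0 => /addrI.
Qed.

Lemma coboundary_czero (K : complex A) :
  (forall n, cx_valid K (czero (cx_dg K n) A)) ->
  (forall n, cx_d K (czero (cx_dg K n) A) = czero _ _) ->
  forall n, coboundary K (czero (cx_dg K n) A).
Proof. by move=> v0 d0 [|m] //=; exists (czero _ _). Qed.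

Variables (K L : complex A).
Variables (phi : forall n, cochain (cx_dg K n) A -> cochain (cx_dg L n) A)
          (psi : forall n, cochain (cx_dg L n) A -> cochain (cx_dg K n) A).
Hypothesis L_valid0 : forall n, cx_valid L (czero (cx_dg L n) A).
Hypothesis L_d0 : forall n, cx_d L (czero (cx_dg L n) A) = czero _ _.
Hypothesis phi_add : forall n (z1 z2 : cochain (cx_dg K n) A),
  phi (cadd z1 z2) = cadd (phi z1) (phi z2).
Hypothesis psi_add : forall n (f1 f2 : cochain (cx_dg L n) A),
  psi (cadd f1 f2) = cadd (psi f1) (psi f2).
Hypothesis phi_valid : forall n (z : cochain (cx_dg K n) A),
  cx_valid K z -> cx_valid L (phi z).
Hypothesis psi_valid : forall n (f : cochain (cx_dg L n) A),
  cx_valid L f -> cx_valid K (psi f).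
Hypothesis phi_d : forall n (z : cochain (cx_dg K n) A),
  cx_valid K z -> phi (cx_d K z) = cx_d L (phi z).
Hypothesis psi_d : forall n (f : cochain (cx_dg L n) A),
  cx_valid L f -> psi (cx_d L f) = cx_d K (psi f).
Hypothesis phiK : forall n (z : cochain (cx_dg K n) A),
  cx_valid K z -> psi (phi z) = z.
Hypothesis psiK : forall n (f : cochain (cx_dg L n) A),
  cx_valid L f -> phi (psi f) = f.

Lemma cohom_iso_of_inverse n : cohom_iso K L n (@phi n).
Proof.
have phi0 m : @phi m (czero _ _) = czero _ _ by apply: additive_czero.
have psi0 m : @psi m (czero _ _) = czero _ _ by apply: additive_czero.
split.
- move=> z [zv zd]; split; first exact: phi_valid.
  by rewrite -phi_d // zd phi0.
- move=> z1 z2 _ _; rewrite phi_add csubxx; exact: coboundary_czero.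
- case: n => [|m] z [zv _] /=.
    by split=> [ez|->]; [rewrite -(phiK zv) ez psi0 | apply: phi0].
  split=> -[c [cv dc]].
    exists (psi c); split; first exact: psi_valid.
    by rewrite -psi_d // dc phiK.
  by exists (phi c); split; [exact: phi_valid | rewrite -phi_d // dc].
- move=> w [wv wd]; exists (psi w).
    by split; [exact: psi_valid | rewrite -psi_d // wd psi0].
  by rewrite psiK // csubxx; exact: coboundary_czero.
Qed.

End CochainIsomorphism.

Section HMmoduleFacts.
Variables (M : comMonoid) (A : HMmodule M).

Lemma hmact0 x y : hmact A x y 0 = 0.
Proof. by apply: (@addrI _ (hmact A x y 0)); rewrite -hmact_add !addr0. Qed.

Lemma hmactN x y a : hmact A x y (- a) = - hmact A x y a.
Proof. by apply/eqP; rewrite -addr_eq0 -hmact_add addNr hmact0. Qed.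

Lemma hmact_sgn x y k a : hmact A x y (sgn k a) = sgn k (hmact A x y a).
Proof. by rewrite /sgn; case: odd; rewrite ?hmactN. Qed.

Lemma hmact_sum x y n (F : 'I_n -> A x) :
  hmact A x y (\sum_(i < n) F i) = \sum_(i < n) hmact A x y (F i).
Proof.
elim/big_rec2: _ => [|i b c _ <-]; first exact: hmact0.
by rewrite hmact_add.
Qed.

Lemma heq_hmact x x' y y' (a : A x) (a' : A x') :
  x = x' -> y = y' -> heq (hmA A) a a' -> heq (hmA A) (hmact A x y a) (hmact A x' y' a').
Proof. by move=> ex ey; subst x' y' => -[p <-]; rewrite castA_id; apply: heq_refl. Qed.

Lemma heq_hmact_cast x x' y (p : x' = x) (a : A x') :
  heq (hmA A) (hmact A x y (castA (hmA A) p a)) (hmact A x' y a).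
Proof. by case: _ / p; apply: heq_refl. Qed.

Lemma heq_hmactM x y w (a : A x) :
  heq (hmA A) (hmact A (mmul x y) w (hmact A x y a)) (hmact A x (mmul y w) a).
Proof. by rewrite hmact_comp; apply: heq_castL; apply: heq_refl. Qed.

Lemma heq_hmact1 x (a : A x) : heq (hmA A) (hmact A x munit a) a.
Proof. by exists (mmulr1 x); rewrite hmact_unit. Qed.

Lemma castA_hmf (B : HMmodule M) (g : HMmor A B) x y (p : x = y) (a : A x) :
  castA (hmA B) p (g x a) = g y (castA (hmA A) p a).
Proof. by case: _ / p. Qed.

End HMmoduleFacts.

Section BarGenerators.
Variable M : comMonoid.

Definition bar_gen n (t : n.-tuple M) : n.-tuple (M * M) := map_tuple (pair munit) t.

Lemma pprod_bar_gen (s : seq M) : pprod (map (pair munit) s) = mprod s.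
Proof. by elim: s => //= x s; rewrite /pprod /= /pmul /= mmul1 => ->. Qed.

Lemma mprod_map_unit (s : seq M) : mprod (map (fun=> (munit : M)) s) = munit.
Proof. by elim: s => //= x s ->; rewrite mmul1. Qed.

Lemma pprod_split (s : seq (M * M)) :
  mmul (mprod (map snd s)) (mprod (map fst s)) = pprod s.
Proof.
elim: s => [|[u v] s IH] /=; first by rewrite mmul1.
move: IH; rewrite /pprod /= /pmul /= => <-.
by rewrite mmulACA (mmulC v u).
Qed.

Lemma snd_yact y (s : seq (M * M)) : map snd (yact y s) = map snd s.
Proof. by case: s. Qed.

Lemma fst_yact n y (t : n.+1.-tuple (M * M)) :
  mprod (map fst (yact y t)) = mmul (mprod (map fst t)) y.
Proof. by case: t => [[|p s] //] _ /=; rewrite [RHS]mmulC mmulA. Qed.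

Lemma snd_umul j w (s : seq (M * M)) :
  (j < size s)%N -> map snd (umul j w s) = map snd s.
Proof.
move=> hj; rewrite /umul map_cat /= map_take map_drop.
by rewrite -(nth_map (p0 M) munit) // -drop_nth ?size_map // cat_take_drop.
Qed.

Lemma fst_umul j w (s : seq (M * M)) : (j < size s)%N ->
  mprod (map fst (umul j w s)) = mmul w (mprod (map fst s)).
Proof.
move=> hj; rewrite /umul map_cat /= map_take map_drop mprod_cat /=.
have hj' : (j < size (map fst s))%N by rewrite size_map.
rewrite -[in RHS](cat_take_drop j (map fst s)) (drop_nth munit hj') mprod_cat /=.
rewrite (nth_map (p0 M) munit) //.
move: (mprod (take _ _)) (mprod (drop _ _)) (nth _ _ _).1 => T D a.
by rewrite -(mmulA w a D) mmulA (mmulC T w) -mmulA.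
Qed.

Lemma snd_pmerge i (s : seq (M * M)) : (i.+1 < size s)%N ->
  map snd (mergeWith (@Defs.pcomp M) (p0 M) i s) = mergeWith mmul munit i (map snd s).
Proof.
move=> hi; rewrite /mergeWith map_cat /= map_take map_drop.
by rewrite !(nth_map (p0 M) munit) // ltnW.
Qed.

Lemma fst_pmerge i (s : seq (M * M)) : (i.+1 < size s)%N ->
  map fst (mergeWith (@Defs.pcomp M) (p0 M) i s) = mergeWith mmul munit i (map fst s).
Proof.
move=> hi; rewrite /mergeWith map_cat /= map_take map_drop.
by rewrite !(nth_map (p0 M) munit) // ltnW.
Qed.

Lemma tnth_umul n (j : 'I_n) w (s : n.-tuple (M * M)) i :
  tnth (umul_tuple j w s) i =
  if i == j then (mmul w (tnth s j).1, (tnth s j).2) else tnth s i.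
Proof.
rewrite !(tnth_nth (p0 M)) /= /umul nth_cat size_take size_tuple (ltn_ord j).
have hi := ltn_ord i; have hj := ltn_ord j.
case: (ltngtP i j) => h.
- by rewrite (nth_take _ h); case: eqP => // /(congr1 val) /= e; lia.
- have -> : (i == j) = false by apply/eqP => e; move: h; rewrite e; lia.
  have -> : (i - j = (i - j.+1).+1)%N by lia.
  by rewrite /= nth_drop; congr nth; lia.
- by rewrite (val_inj h) eqxx subnn.
Qed.

Lemma yact_umul0 n y (s : n.+1.-tuple (M * M)) : yact_tuple y s = umul_tuple ord0 y s.
Proof. by apply: val_inj; case: s => [[|p r] //] Hs; rewrite /= /umul /= drop0. Qed.

Definition bar_nf n (t : n.+1.-tuple (M * M)) : n.+1.-tuple (M * M) :=
  yact_tuple (mprod (map fst t)) (bar_gen (map_tuple snd t)).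

Lemma bar_nf_eq n (t t' : n.+1.-tuple (M * M)) :
  map snd t = map snd t' -> mprod (map fst t) = mprod (map fst t') -> bar_nf t = bar_nf t'.
Proof. by move=> e1 e2; apply: val_inj; rewrite /= e1 e2. Qed.

Lemma bar_nf_id n (t : n.+1.-tuple (M * M)) :
  (forall j : 'I_n.+1, (0 < j)%N -> (tnth t j).1 = munit) -> bar_nf t = t.
Proof.
move=> ht; set t0 := bar_gen (map_tuple snd t); set u0 := (tnth t ord0).1.
have te : t = umul_tuple ord0 u0 t0.
  apply: eq_from_tnth => i; rewrite tnth_umul !tnth_map /=.
  case: eqP => [->|ne]; first by rewrite mmulr1 /u0; case: (tnth t ord0).
  have hi : (0 < i)%N.
    by case: i ne => [[|i'] hi'] ne //=; exfalso; apply: ne; apply: val_inj.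
  by rewrite -(ht i hi); case: (tnth t i).
have eU : mprod (map fst t) = u0.
  rewrite {1}te fst_umul ?size_tuple // /t0 /= -map_comp.
  by rewrite mprod_map_unit mmulr1.
by rewrite /bar_nf yact_umul0 eU -/t0 -te.
Qed.

End BarGenerators.

Section Restriction.
Variables (M : comMonoid) (A : HMmodule M).

Definition leech_of_bar n : cochain (@barDeg M n) A -> cochain (@leechDeg M n) A :=
  match n with
  | 0 => fun z t => z (mprod t)
  | m.+1 => fun z t => castA (hmA A) (pprod_bar_gen t) (z (bar_gen t))
  end.

Definition bar_of_leech n : cochain (@leechDeg M n) A -> cochain (@barDeg M n) A :=
  match n with
  | 0 => fun f x => castA (hmA A) (mmul1 x) (hmact A munit x (f [tuple]))
  | m.+1 => fun f t => castA (hmA A) (pprod_split t)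
      (hmact A (mprod (map snd t)) (mprod (map fst t)) (f (map_tuple snd t)))
  end.

Lemma heq_bar_of_leech m (f : cochain (@leechDeg M m.+1) A) (t : m.+1.-tuple (M * M))
    V U (X : A V) :
  mprod (map snd t) = V -> mprod (map fst t) = U -> heq (hmA A) (f (map_tuple snd t)) X ->
  heq (hmA A) (bar_of_leech f t) (hmact A V U X).
Proof. by move=> eV eU hX; apply: heq_castL; apply: heq_hmact. Qed.

Lemma leech_of_bar_dS m (z : cochain (@barDeg M m.+1) A) : bar_valid z ->
  leech_of_bar (@bar_d M A m.+1 z) = leech_d (leech_of_bar z).
Proof.
case=> nat _ _; apply: functional_extensionality_dep => t; apply/esym.
rewrite /leech_d /leech_of_bar /bar_d /bar_dS !castA_add castA_sum castA_sgn.
have e_head : thead t = pmul (thead (bar_gen t)).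
  by rewrite /bar_gen /thead tnth_map /pmul /= mmul1.
have e_last : tnth t ord_max = pmul (tnth (bar_gen t) ord_max).
  by rewrite /bar_gen tnth_map /pmul /= mmul1.
have e_behead : bar_gen (behead_tuple t) = behead_tuple (bar_gen t).
  by apply: val_inj; rewrite /= behead_map.
have e_init : bar_gen (init_tuple t) = init_tuple (bar_gen t).
  by apply: val_inj; rewrite /= map_take.
congr (_ + _ + _).
- apply: (@heq_eq _ (hmA A)); apply: heq_castL; apply: heq_castR; apply: heq_castR.
  rewrite nat; apply: heq_castR; apply: heq_hmact => //.
    by rewrite /leechDeg -pprod_bar_gen; congr pprod; rewrite -e_behead.
  by apply: heq_castL; apply: (@heq_app _ (hmA A) _ _ z).
- apply: eq_bigr => i _; rewrite castA_sgn; congr sgn.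
  apply: (@heq_eq _ (hmA A)); apply: heq_castL; apply: heq_castL; apply: heq_castR; apply: heq_castR.
  apply: (@heq_app _ (hmA A) _ _ z); apply: val_inj.
  rewrite /= /mergeWith map_cat map_take /=.
  have hi := ltn_ord i.
  rewrite -map_drop (nth_map munit) ?(nth_map munit) ?size_tuple; try lia.
  by rewrite /Defs.pcomp /= mmul1.
- congr sgn.
  apply: (@heq_eq _ (hmA A)); apply: heq_castL; apply: heq_castR; apply: heq_castR.
  rewrite nat; apply: heq_castR; apply: heq_hmact => //.
    by rewrite /leechDeg -pprod_bar_gen; congr pprod; rewrite -e_init.
  by apply: heq_castL; apply: (@heq_app _ (hmA A) _ _ z).
Qed.

Lemma bar_of_leech_dS m (f : cochain (@leechDeg M m.+1) A) :
  bar_of_leech (leech_d f) = @bar_d M A m.+1 (bar_of_leech f).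
Proof.
apply: functional_extensionality_dep => t; apply/esym.
rewrite /bar_d /bar_dS [in RHS]/bar_of_leech /leech_d.
rewrite !hmact_add hmact_sum !castA_add castA_sum.
have eU1 := mprod_left (map_tuple fst t).
have eU2 := mprod_right (map_tuple fst t).
congr (_ + _ + _).
- apply: (@heq_eq _ (hmA A)); apply: heq_castL; apply: heq_castR; apply: heq_sym.
  apply: heq_trans (heq_hmact_cast (A := A) _ _ _) _.
  apply: heq_trans (heq_hmactM (A := A) _ _ _) _.
  apply: heq_sym; apply: heq_bar_of_leech.
  + by rewrite snd_yact /= behead_map.
  + rewrite fst_yact -[in RHS]eU1 /thead !tnth_map /pmul /= behead_map.
    by rewrite [RHS]mmulC -mmulA.
  + by apply: (@heq_app _ (hmA A) _ _ f); apply: val_inj; rewrite /= snd_yact behead_map.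
- apply: eq_bigr => i _; rewrite hmact_sgn castA_sgn; congr sgn.
  have hi := ltn_ord i.
  apply: (@heq_eq _ (hmA A)); apply: heq_castL; apply: heq_castR; apply: heq_bar_of_leech.
  + by rewrite /= snd_pmerge ?size_tuple // mprod_mergeL // size_map size_tuple.
  + by rewrite /= fst_pmerge ?size_tuple // mprod_mergeL // size_map size_tuple.
  + apply: heq_castR; apply: (@heq_app _ (hmA A) _ _ f); apply: val_inj.
    by rewrite /= snd_pmerge // size_tuple.
- rewrite hmact_sgn castA_sgn; congr sgn.
  apply: (@heq_eq _ (hmA A)); apply: heq_castL; apply: heq_castR; apply: heq_sym.
  apply: heq_trans (heq_hmact_cast (A := A) _ _ _) _.
  apply: heq_trans (heq_hmactM (A := A) _ _ _) _.
  apply: heq_sym; apply: heq_bar_of_leech.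
  + by rewrite snd_yact /= map_take.
  + rewrite fst_yact -[in RHS]eU2 !tnth_map /pmul /= map_take.
    by rewrite [RHS]mmulC -mmulA.
  + by apply: (@heq_app _ (hmA A) _ _ f); apply: val_inj; rewrite /= snd_yact map_take.
Qed.

End Restriction.

Section RestrictionIsomorphism.
Variables (M : comMonoid) (A : HMmodule M).

Lemma leech_of_bar_validS m (z : cochain (@barDeg M m.+1) A) :
  bar_valid z -> leech_valid (leech_of_bar z).
Proof.
case=> _ _ norm t i hi; rewrite /leech_of_bar (norm _ i) ?castA_0 //.
by rewrite /bar_gen tnth_map.
Qed.

Lemma bar_of_leech_validS m (f : cochain (@leechDeg M m.+1) A) :
  leech_valid f -> bar_valid (bar_of_leech f).
Proof.
move=> fv; split.
- move=> y t; apply: (@heq_eq _ (hmA A)); apply: heq_castR; apply: heq_sym.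
  pose X := hmact A _ (mprod (map fst t)) (f (map_tuple snd t)).
  have hX : heq (hmA A) (hmact A (pprod t) y (bar_of_leech f t))
      (hmact A (mmul (mprod (map snd t)) (mprod (map fst t))) y X).
    apply: heq_hmact => //; first exact: (esym (pprod_split t)).
    by apply: heq_castL; apply: heq_refl.
  apply: heq_trans hX _; apply: heq_trans (heq_hmactM (A := A) _ _ _) _.
  apply: heq_sym; apply: heq_bar_of_leech; first by rewrite snd_yact.
    exact: fst_yact.
  by apply: (@heq_app _ (hmA A) _ _ f); apply: val_inj; rewrite /= snd_yact.
- move=> i w t; apply: (@heq_eq _ (hmA A)); apply: heq_castR.
  have hi := ltn_ord i.
  apply: heq_sym; apply: heq_castL; apply: heq_sym; apply: heq_bar_of_leech.
  + by rewrite !snd_umul ?size_tuple //= /bump /=; lia.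
  + by rewrite !fst_umul ?size_tuple //= /bump /=; lia.
  + apply: (@heq_app _ (hmA A) _ _ f); apply: val_inj.
    by rewrite /= !snd_umul ?size_tuple //= /bump /=; lia.
- move=> t i hi; rewrite /bar_of_leech (fv _ i); first by rewrite hmact0 castA_0.
  by rewrite tnth_map.
Qed.

Lemma bar_of_leechKS m (f : cochain (@leechDeg M m.+1) A) :
  leech_of_bar (bar_of_leech f) = f.
Proof.
apply: functional_extensionality_dep => t.
rewrite /leech_of_bar; apply: (@heq_eq _ (hmA A)); apply: heq_castL.
apply: heq_trans (heq_hmact1 (f t)); apply: heq_bar_of_leech.
- by rewrite -map_comp map_id.
- by rewrite -map_comp mprod_map_unit.
- by apply: (@heq_app _ (hmA A) _ _ f); apply: val_inj; rewrite /= -map_comp map_id.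
Qed.

Section NormalForm.
Variables (m : nat) (z : cochain (@barDeg M m.+1) A).
Hypothesis zv : bar_valid z.

Lemma heq_umul0 w (s : m.+1.-tuple (M * M)) j (hj : (j < m.+1)%N) :
  heq (hmA A) (z (umul_tuple (Ordinal hj) w s)) (z (umul_tuple ord0 w s)).
Proof.
case: zv => _ bal _.
elim: j hj => [|k IH] hj.
  by apply: (@heq_app _ (hmA A) _ _ z); congr umul_tuple; apply: val_inj.
have hk : (k < m)%N by lia.
have hk' : (k < m.+1)%N by lia.
have -> : Ordinal hj = lift ord0 (Ordinal hk) by apply: val_inj.
have e2 : Ordinal hk' = widen_ord (leqnSn m) (Ordinal hk) by apply: val_inj.
apply: heq_trans (IH hk'); rewrite e2 bal.
by apply: heq_castR; apply: heq_refl.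
Qed.

(* Induct on k, moving the left component of slot k to slot 0 by balancing. *)
Lemma heq_bar_nf_le k : (k <= m)%N -> forall t : m.+1.-tuple (M * M),
  (forall j : 'I_m.+1, (k < j)%N -> (tnth t j).1 = munit) ->
  heq (hmA A) (z t) (z (bar_nf t)).
Proof.
elim: k => [_|k IH hk] t ht; first by rewrite bar_nf_id //; apply: heq_refl.
have hk' : (k.+1 < m.+1)%N by lia.
pose jk := Ordinal hk'.
pose u := (tnth t jk).1.
pose s := [tuple (if i == jk then (munit, (tnth t i).2) else tnth t i) | i < m.+1].
have te : t = umul_tuple jk u s.
  apply: eq_from_tnth => i; rewrite tnth_umul !tnth_mktuple.
  by case: eqP => [->|ne] //; rewrite eqxx /= mmulr1 /u; case: (tnth t jk).
apply: heq_trans (@heq_app _ (hmA A) _ _ z _ _ te) _.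
apply: heq_trans (heq_umul0 u s hk') _.
have hs1 : map snd (umul_tuple ord0 u s) = map snd t.
  by rewrite [in RHS]te !snd_umul ?size_tuple.
have hs2 : mprod (map fst (umul_tuple ord0 u s)) = mprod (map fst t).
  by rewrite [in RHS]te !fst_umul ?size_tuple.
rewrite -(bar_nf_eq hs1 hs2); apply: IH; first by lia.
move=> j hkj; rewrite tnth_umul.
have -> : (j == ord0) = false by apply/eqP => e; move: hkj; rewrite e.
rewrite tnth_mktuple; case: eqP => // ne; apply: ht.
have : (j : nat) <> jk by move=> e; apply: ne; apply: val_inj.
by rewrite /=; lia.
Qed.

Lemma leech_of_barKS : bar_of_leech (leech_of_bar z) = z.
Proof.
apply: functional_extensionality_dep => t.
case: (zv) => nat _ _.
apply: (@heq_eq _ (hmA A)).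
apply: heq_trans (heq_bar_of_leech (V := pprod (bar_gen (map_tuple snd t)))
                   (U := mprod (map fst t)) (X := z (bar_gen (map_tuple snd t))) _ _ _) _.
- by rewrite /= pprod_bar_gen.
- by [].
- by apply: heq_castL; apply: heq_refl.
- apply: heq_trans (_ : heq (hmA A) _ (z (bar_nf t))) _.
    by rewrite /bar_nf nat; apply: heq_sym; apply: heq_castL; apply: heq_refl.
  apply: heq_sym; apply: (heq_bar_nf_le (leqnn m)) => j hj.
  by have := ltn_ord j; lia.
Qed.

End NormalForm.

End RestrictionIsomorphism.

Section AllDegrees.
Variables (M : comMonoid) (A : HMmodule M).

Lemma leech_valid_czero n : leech_valid (czero (@leechDeg M n) A).
Proof. by []. Qed.

Lemma leech_d_czero n : leech_d (czero (@leechDeg M n) A) = czero _ _.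
Proof.
apply: functional_extensionality_dep => t.
rewrite /leech_d /czero !hmact0 !castA_0 sgn0 big1 => [|i _]; first by rewrite !addr0.
by rewrite castA_0 sgn0.
Qed.

Lemma leech_d0 (f : cochain (@leechDeg M 0) A) : leech_d f = czero _ _.
Proof.
apply: functional_extensionality_dep => t.
rewrite /leech_d big_ord0 addr0 /sgn /=; apply/eqP; rewrite subr_eq0; apply/eqP.
apply: (@heq_eq _ (hmA A)); apply: heq_castL; apply: heq_castR; apply: heq_hmact.
- by case: t => [[|x [|y s]] //] Ht.
- by rewrite /thead; congr tnth; apply: val_inj.
- have e : behead_tuple t = init_tuple t.
    by rewrite (tuple0 (behead_tuple t)) (tuple0 (init_tuple t)).
  exact: (@heq_app _ (hmA A) _ _ f _ _ e).
Qed.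

Lemma bar_d0 (phi : cochain (@barDeg M 0) A) : @bar_d M A 0 phi = czero _ _.
Proof. by apply: functional_extensionality_dep => t; rewrite /= /bar_d0 /sgn /= subrr. Qed.

Lemma leech_of_bar_add n (z1 z2 : cochain (@barDeg M n) A) :
  leech_of_bar (cadd z1 z2) = cadd (leech_of_bar z1) (leech_of_bar z2).
Proof.
apply: functional_extensionality_dep => t.
by case: n z1 z2 t => [|m] z1 z2 t //=; rewrite /cadd castA_add.
Qed.

Lemma bar_of_leech_add n (f1 f2 : cochain (@leechDeg M n) A) :
  bar_of_leech (cadd f1 f2) = cadd (bar_of_leech f1) (bar_of_leech f2).
Proof.
apply: functional_extensionality_dep => t.
by case: n f1 f2 t => [|m] f1 f2 t /=; rewrite /cadd hmact_add castA_add.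
Qed.

Lemma leech_of_bar_valid n (z : cochain (@barDeg M n) A) :
  bar_valid z -> leech_valid (leech_of_bar z).
Proof. by case: n z => [|m] z; [move=> _ t [] | apply: leech_of_bar_validS]. Qed.

Lemma bar_of_leech_valid n (f : cochain (@leechDeg M n) A) :
  leech_valid f -> bar_valid (bar_of_leech f).
Proof.
case: n f => [|m] f; last exact: bar_of_leech_validS.
move=> _ x y; apply: (@heq_eq _ (hmA A)); apply: heq_castL; apply: heq_sym.
apply: heq_trans (heq_hmact_cast (A := A) _ _ _) _.
exact: heq_hmactM.
Qed.

Lemma leech_of_bar_d n (z : cochain (@barDeg M n) A) :
  bar_valid z -> leech_of_bar (@bar_d M A n z) = leech_d (leech_of_bar z).
Proof.
case: n z => [|m] z; last exact: leech_of_bar_dS.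
by rewrite bar_d0 leech_d0 (additive_czero (@leech_of_bar_add 1)).
Qed.

Lemma bar_of_leech_d n (f : cochain (@leechDeg M n) A) :
  bar_of_leech (leech_d f) = @bar_d M A n (bar_of_leech f).
Proof.
case: n f => [|m] f; last exact: bar_of_leech_dS.
by rewrite bar_d0 leech_d0 (additive_czero (@bar_of_leech_add 1)).
Qed.

Lemma leech_of_barK n (z : cochain (@barDeg M n) A) :
  bar_valid z -> bar_of_leech (leech_of_bar z) = z.
Proof.
case: n z => [|m] z zv; last exact: leech_of_barKS.
apply: functional_extensionality_dep => x /=.
apply: (@heq_eq _ (hmA A)); apply: heq_castL; rewrite -zv.
exact: (@heq_app _ (hmA A) _ _ z _ _ (mmul1 x)).
Qed.

Lemma bar_of_leechK n (f : cochain (@leechDeg M n) A) : leech_of_bar (bar_of_leech f) = f.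
Proof.
case: n f => [|m] f; last exact: bar_of_leechKS.
apply: functional_extensionality_dep => t /=.
apply: (@heq_eq _ (hmA A)); apply: heq_castL.
apply: heq_trans (_ : heq (hmA A) _ (hmact A munit munit (f [tuple]))) _.
  by apply: heq_hmact; rewrite ?(tuple0 t) //; apply: heq_refl.
apply: heq_trans (heq_hmact1 _) _.
exact: (@heq_app _ (hmA A) _ _ f _ _ (esym (tuple0 t))).
Qed.

Lemma leech_of_bar_post (B : HMmodule M) (g : HMmor A B) n (z : cochain (@barDeg M n) A) :
  leech_of_bar (cpost g z) = cpost g (leech_of_bar z).
Proof.
apply: functional_extensionality_dep => t.
by case: n z t => [|m] z t //=; rewrite /cpost castA_hmf.
Qed.

End AllDegrees.

Theorem proposition5p3 (M : comMonoid) :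
  exists Phi : forall (A : HMmodule M) (n : nat),
      cochain (@barDeg M n) A -> cochain (@leechDeg M n) A,
    (forall (A : HMmodule M) (n : nat), cohom_iso (barCx A) (leechCx A) n (Phi A n))
    /\
    (forall (A B : HMmodule M) (g : HMmor A B) (n : nat) (z : cochain (@barDeg M n) A),
        cocycle (barCx A) z ->
        coboundary (leechCx B)
          (csub (Phi B n (cpost g z)) (cpost g (Phi A n z)))).
Proof.
exists (@leech_of_bar M); split=> [A n | A B g n z _].
  apply: (@cohom_iso_of_inverse M A (barCx A) (leechCx A) _ (@bar_of_leech M A)).
  - exact: leech_valid_czero.
  - exact: leech_d_czero.
  - exact: leech_of_bar_add.
  - exact: bar_of_leech_add.
  - exact: leech_of_bar_valid.
  - exact: bar_of_leech_valid.
  - exact: leech_of_bar_d.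
  - by move=> m f _; apply: bar_of_leech_d.
  - exact: leech_of_barK.
  - by move=> m f _; apply: bar_of_leechK.
rewrite leech_of_bar_post csubxx.
by apply: coboundary_czero => m; [exact: leech_valid_czero | exact: leech_d_czero].
Qed.
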